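(* Let $H$ be a Hermitian operator (Hamiltonian) on $\mathbb{C}^d$, let $\{\mathcal{O}_i\}_{i\in\mathcal{I}}$ be a finite family of Hermitian operators on $\mathbb{C}^d$ indexed by a finite set $\mathcal{I}$, and let $\rho$ be a density matrix on $\mathbb{C}^d$ with $o_i=\mathrm{tr}(\rho\,\mathcal{O}_i)$ for all $i\in\mathcal{I}$. Define the feasible set $$\Omega_{\mathcal{I}}=\{X:\ X\succeq 0,\ \mathrm{tr}(X)=1,\ \mathrm{tr}(X\mathcal{O}_i)=o_i\ \forall i\in\mathcal{I}\}.$$ Then for every unitary $U\in\mathcal{U}(d)$, $$\min_{X\in\Omega_{\mathcal{I}}}\big[\mathrm{tr}(HX)-\mathrm{tr}(HUXU^\dagger)\big]\ \le\ \min_{X\in\Omega_{\mathcal{I}}}\max_{V\in\mathcal{U}(d)}\big[\mathrm{tr}(HX)-\mathrm{tr}(HVXV^\dagger)\big]\ \le\ \mathcal{E}(\rho,H).$$ In particular, if $\tilde\rho\in\Omega_{\mathcal{I}}$ is any feasible state (e.g. a minimizer over $\Omega_{\mathcal{I}}$ of some linear function, or of the purity $\mathrm{tr}(X^2)$), with spectral decomposition $\tilde\rho=\sum_j\tilde r_j|\tilde r_j\rangle\langle\tilde r_j|$, $\tilde r_1\ge\tilde r_2\ge\cdots$, and $H=\sum_j E_j|E_j\rangle\langle E_j|$ with $E_1\le E_2\le\cdots$, and $\tilde U_\star=\sum_j|E_j\rangle\langle\tilde r_j|$, then $$\mathcal{E}_{\rm LB}:=\min_{X\in\Omega_{\mathcal{I}}}\big[\mathrm{tr}(HX)-\mathrm{tr}(H\tilde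 U_\star X\tilde U_\star^\dagger)\big]\ \le\ \mathcal{E}(\rho,H).$$
   Context: For a density matrix $\rho$ on $\mathbb{C}^d$ and a Hamiltonian $H$, the ergotropy is $\mathcal{E}(\rho,H)=\max_{U\in\mathcal{U}(d)}\big[\mathrm{tr}(\rho H)-\mathrm{tr}(HU\rho U^\dagger)\big]$, where $\mathcal{U}(d)$ is the group of $d\times d$ unitaries. *)

From HB Require Import structures.
From mathcomp Require Import all_boot all_order all_algebra.
From mathcomp Require Import complex.
From mathcomp Require Import classical_sets reals constructive_ereal ereal.

Set Implicit Arguments.
Unset Strict Implicit.
Unset Printing Implicit Defensive.

Import Order.TTheory GRing.Theory Num.Theory.
Local Open Scope ring_scope.
Local Open Scope classical_set_scope.

Definition dagger (R : realType) (m n : nat) (A : 'M[R[i]]_(m, n)) : 'M[R[i]]_(n, m) :=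
  (map_mx Num.conj A)^T.

Definition herm_op (R : realType) (d : nat) (A : 'M[R[i]]_d) : Prop :=
  dagger A = A.

Definition psd_op (R : realType) (d : nat) (X : 'M[R[i]]_d) : Prop :=
  herm_op X /\ forall v : 'cV[R[i]]_d, 0 <= (dagger v *m X *m v) 0 0.

Definition density_op (R : realType) (d : nat) (X : 'M[R[i]]_d) : Prop :=
  psd_op X /\ \tr X = 1.

Definition unitary_op (R : realType) (d : nat) (U : 'M[R[i]]_d) : Prop :=
  U *m dagger U = 1%:M.

Definition Omega (R : realType) (d : nat) (I : finType)
    (O : I -> 'M[R[i]]_d) (o : I -> R[i]) : set 'M[R[i]]_d :=
  [set X | psd_op X /\ \tr X = 1 /\ forall k : I, \tr (X *m O k) = o k].

(* tr(HX) - tr(H U X U^dagger); real for Hermitian H, X, so we take the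
   real part to land in R *)
Definition work (R : realType) (d : nat) (H X U : 'M[R[i]]_d) : R :=
  complex.Re (\tr (H *m X) - \tr (H *m (U *m X *m dagger U))).

Definition ergotropy (R : realType) (d : nat) (rho H : 'M[R[i]]_d) : \bar R :=
  ereal_sup [set (work H rho U)%:E | U in unitary_op (d:=d)].

From HB Require Import structures.
From mathcomp Require Import all_boot all_order all_algebra.
From mathcomp Require Import complex.
From mathcomp Require Import classical_sets reals constructive_ereal ereal.

(* The ergotropy of X is the supremum of the work over all unitaries, so the
   work of any fixed unitary U is a lower bound for it; taking infima over
   Omega preserves this, and since rho itself lies in Omega, the infimum of the
   ergotropy over Omega is at most the ergotropy of rho.  For the second part
   only the unitarity of U* = Q P^dagger matters. *)

Set Implicit Arguments.
Unset Strict Implicit.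
Unset Printing Implicit Defensive.

Import Order.TTheory GRing.Theory Num.Theory.
Local Open Scope ring_scope.
Local Open Scope classical_set_scope.

Section Dagger.

Variable R : realType.

Lemma daggerK (m n : nat) (A : 'M[R[i]]_(m, n)) : dagger (dagger A) = A.
Proof. by apply/matrixP=> a b; rewrite !mxE conjCK. Qed.

Lemma daggerM (m n p : nat) (A : 'M[R[i]]_(m, n)) (B : 'M[R[i]]_(n, p)) :
  dagger (A *m B) = dagger B *m dagger A.
Proof. by rewrite /dagger map_mxM trmx_mul. Qed.

Lemma sum_col_mul_dagger_col (m n p : nat)
    (A : 'M[R[i]]_(m, n)) (B : 'M[R[i]]_(p, n)) :
  \sum_(j < n) col j A *m dagger (col j B) = A *m dagger B.
Proof.
apply/matrixP=> a b; rewrite summxE !mxE; apply: eq_bigr => j _.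
by rewrite !mxE big_ord1 !mxE.
Qed.

Lemma unitary_op_mul_dagger (d : nat) (P Q : 'M[R[i]]_d) :
  unitary_op P -> unitary_op Q -> unitary_op (Q *m dagger P).
Proof.
move=> /mulmx1C daggerPP hQ.
by rewrite /unitary_op daggerM daggerK -mulmxA (mulmxA _ P) daggerPP mul1mx.
Qed.

End Dagger.

Section ErgotropyBounds.

Variables (R : realType) (d : nat).
Implicit Types (H X rho U : 'M[R[i]]_d) (S : set 'M[R[i]]_d).

Lemma work_le_ergotropy H X U :
  unitary_op U -> ((work H X U)%:E <= ergotropy X H)%E.
Proof. by move=> hU; apply: ereal_sup_ubound; exists U. Qed.

Lemma inf_work_le_inf_ergotropy S H U : unitary_op U ->
  (ereal_inf [set (work H X U)%:E | X in S]
     <= ereal_inf [set ergotropy X H | X in S])%E.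
Proof.
move=> hU; apply: le_ereal_inf_tmp => _ [X SX <-].
apply: le_trans (work_le_ergotropy H X hU).
by apply: ereal_inf_lbound; exists X.
Qed.

Lemma inf_ergotropy_le S H rho : S rho ->
  (ereal_inf [set ergotropy X H | X in S] <= ergotropy rho H)%E.
Proof. by move=> Srho; apply: ereal_inf_lbound; exists rho. Qed.

Lemma density_op_Omega (I : finType) (O : I -> 'M[R[i]]_d) (o : I -> R[i]) rho :
  (forall k, o k = \tr (rho *m O k)) -> density_op rho -> Omega O o rho.
Proof. by move=> ho [psd_rho tr_rho]; split=> //; split=> // k; rewrite ho. Qed.

End ErgotropyBounds.

Theorem mainTheorem1 (R : realType) (d : nat) (I : finType)
    (H : 'M[R[i]]_d) (O : I -> 'M[R[i]]_d) (rho : 'M[R[i]]_d) (o : I -> R[i]) :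
  herm_op H ->
  (forall k : I, herm_op (O k)) ->
  density_op rho ->
  (forall k : I, o k = \tr (rho *m O k)) ->
  (forall U : 'M[R[i]]_d, unitary_op U ->
     (ereal_inf [set (work H X U)%:E | X in Omega O o]
        <= ereal_inf [set ergotropy X H | X in Omega O o])%E /\
     (ereal_inf [set ergotropy X H | X in Omega O o] <= ergotropy rho H)%E)
  /\
  (forall (rt : 'M[R[i]]_d) (P Q : 'M[R[i]]_d) (r E : 'I_d -> R),
     Omega O o rt ->
     unitary_op P -> unitary_op Q ->
     rt = \sum_(j < d) (Complex (r j) 0) *: (col j P *m dagger (col j P)) ->
     (forall j k : 'I_d, (j <= k)%N -> r k <= r j) ->
     H = \sum_(j < d) (Complex (E j) 0) *: (col j Q *m dagger (col j Q)) ->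
     (forall j k : 'I_d, (j <= k)%N -> E j <= E k) ->
     let Ustar := \sum_(j < d) col j Q *m dagger (col j P) in
     (ereal_inf [set (work H X Ustar)%:E | X in Omega O o] <= ergotropy rho H)%E).
Proof.
move=> _ _ density_rho ho.
have Omega_rho : Omega O o rho := density_op_Omega ho density_rho.
have bounds U : unitary_op U ->
    (ereal_inf [set (work H X U)%:E | X in Omega O o]
       <= ereal_inf [set ergotropy X H | X in Omega O o])%E /\
    (ereal_inf [set ergotropy X H | X in Omega O o] <= ergotropy rho H)%E.
  by move=> hU; split; [exact: inf_work_le_inf_ergotropy | exact: inf_ergotropy_le].
split=> // rt P Q r E _ hP hQ _ _ _ _ /=.
rewrite sum_col_mul_dagger_col.
have [work_le inf_ergotropy_le_rho] := bounds _ (unitary_op_mul_dagger hP hQ).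
exact: (le_trans work_le inf_ergotropy_le_rho).
Qed.
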